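(* Let $q\equiv0\pmod3$, $q\ge9$. The group $G_q$ acts transitively on the points of the axis $\Gamma_{\mathrm{A}}$ of $\Gamma$, i.e. of the line $x_0=x_3=0$.
   Context: $\mathrm{PG}(3,q)$ has points $P(x_0,x_1,x_2,x_3)$. The twisted cubic is $\mathcal{C}=\{P(t^3,t^2,t,1):t\in\mathbb{F}_q\}\cup\{P(1,0,0,0)\}$ and $G_q$ is the group of projectivities of $\mathrm{PG}(3,q)$ mapping $\mathcal{C}$ to itself. For $q\equiv0\pmod3$ the osculating planes $x_0-t^3x_3=0$ ($t\in\mathbb{F}_q$) and $x_3=0$ all contain the line $\Gamma_{\mathrm{A}}$: $x_0=x_3=0$, called the axis of $\Gamma$; it is fixed by $G_q$. *)

From HB Require Import structures.
From mathcomp Require Import all_boot all_order all_algebra.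
Set Implicit Arguments. Unset Strict Implicit. Unset Printing Implicit Defensive.
Import GRing.Theory.
Local Open Scope ring_scope.

(* PG(3,q) over a finite field F: a point P(x0,x1,x2,x3) is represented by a
   nonzero row vector x : 'rV[F]_4 with x 0 i = x_i, up to nonzero scalars. *)

Definition coord4 (F : fieldType) (a b c d : F) : 'rV[F]_4 :=
  \row_(i < 4) [:: a; b; c; d]`_i.

Definition same_point (F : fieldType) (u v : 'rV[F]_4) : Prop :=
  exists c : F, c != 0 /\ u = c *: v.

Definition on_twisted_cubic (F : fieldType) (v : 'rV[F]_4) : Prop :=
  (exists t : F, same_point v (coord4 (t ^+ 3) (t ^+ 2) t 1))
  \/ same_point v (coord4 1 0 0 0).

Definition on_axis (F : fieldType) (v : 'rV[F]_4) : Prop :=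
  v != 0 /\ v 0 0 = 0 /\ v 0 3 = 0.

Definition in_Gq (F : fieldType) (M : 'M[F]_4) : Prop :=
  M \in unitmx /\
  forall v : 'rV[F]_4, v != 0 ->
    (on_twisted_cubic v <-> on_twisted_cubic (v *m M)).

From HB Require Import structures.
From mathcomp Require Import all_boot all_order all_algebra finfield ring.
Set Implicit Arguments.
Unset Strict Implicit.
Unset Printing Implicit Defensive.
Import GRing.Theory.
Local Open Scope ring_scope.

(* In characteristic 3 the translation t |-> t + c of the parameter of the
   cubic acts on the axis as P(0,a,b,0) |-> P(0,a-cb,b,0), because the
   binomial coefficients 3 vanish; so every axis point P(0,a,b,0) with b != 0
   is moved to P(0,1,1,0).  The involution t |-> 1/t swaps a and b and takes
   care of the point P(0,1,0,0).  Transitivity follows since G_q is a group. *)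

Section TwistedCubicGroup.
Variable F : fieldType.

Definition mx4 (r0 r1 r2 r3 : seq F) : 'M[F]_4 :=
  \matrix_(i < 4, j < 4) (nth [::] [:: r0; r1; r2; r3] i)`_j.

Definition cubic_point (t : F) := coord4 (t ^+ 3) (t ^+ 2) t 1.
Definition cubic_infty := coord4 (1 : F) 0 0 0.

Definition cubic_translation (c : F) :=
  mx4 [:: 1; 0; 0; 0] [:: 3 * c; 1; 0; 0] [:: 3 * c ^+ 2; 2 * c; 1; 0]
      [:: c ^+ 3; c ^+ 2; c; 1].
Definition cubic_inversion :=
  mx4 [:: 0; 0; 0; 1] [:: 0; 0; 1; 0] [:: 0; 1; 0; 0] [:: 1; 0; 0; 0].

Lemma coord4E (v : 'rV[F]_4) : v = coord4 (v 0 0) (v 0 1) (v 0 2) (v 0 3).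
Proof.
apply/rowP => j; rewrite !mxE; case: j => [[|[|[|[|j]]]] Hj] //=;
  by congr (v _ _); apply/val_inj.
Qed.

Lemma mul_coord4 a b c d (M : 'M[F]_4) :
  coord4 a b c d *m M = coord4
    (a * M 0 0 + b * M 1 0 + c * M 2 0 + d * M 3 0)
    (a * M 0 1 + b * M 1 1 + c * M 2 1 + d * M 3 1)
    (a * M 0 2 + b * M 1 2 + c * M 2 2 + d * M 3 2)
    (a * M 0 3 + b * M 1 3 + c * M 2 3 + d * M 3 3).
Proof.
apply/rowP => j; rewrite !mxE !big_ord_recl big_ord0 !mxE.
case: j => [[|[|[|[|j]]]] Hj] //=; rewrite addr0 !addrA; do 3? congr (_ + _);
  by congr (_ * M _ _); apply/val_inj.
Qed.

Lemma scale_coord4 (k a b c d : F) :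
  k *: coord4 a b c d = coord4 (k * a) (k * b) (k * c) (k * d).
Proof. by apply/rowP => j; rewrite !mxE; case: j => [[|[|[|[|j]]]] Hj]. Qed.

Lemma same_point_coord4 {k a b c d a' b' c' d' : F} : k != 0 ->
  a = k * a' -> b = k * b' -> c = k * c' -> d = k * d' ->
  same_point (coord4 a b c d) (coord4 a' b' c' d').
Proof. by move=> k0 -> -> -> ->; exists k; rewrite scale_coord4. Qed.

Lemma same_point_sym (u v : 'rV[F]_4) : same_point u v -> same_point v u.
Proof.
by case=> k [k0 ->]; exists k^-1; rewrite invr_eq0 scalerA mulVf ?scale1r.
Qed.

Lemma same_point_trans (u v w : 'rV[F]_4) :
  same_point u v -> same_point v w -> same_point u w.
Proof.
by case=> k [k0 ->] [l [l0 ->]]; exists (k * l); rewrite mulf_neq0 ?scalerA.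
Qed.

Lemma same_point_mulmx (u v : 'rV[F]_4) (M : 'M[F]_4) :
  same_point u v -> same_point (u *m M) (v *m M).
Proof. by case=> k [k0 ->]; exists k; rewrite -scalemxAl. Qed.

Lemma on_twisted_cubicZ (k : F) (v : 'rV[F]_4) :
  k != 0 -> on_twisted_cubic v -> on_twisted_cubic (k *: v).
Proof.
move=> k0 [[t [d [d0 ->]]]|[d [d0 ->]]]; [left; exists t | right];
  by exists (k * d); rewrite scalerA mulf_neq0.
Qed.

Definition maps_cubic (M : 'M[F]_4) :=
  forall v : 'rV[F]_4, on_twisted_cubic v -> on_twisted_cubic (v *m M).

Lemma maps_cubicP (M : 'M[F]_4) :
  (forall t, on_twisted_cubic (cubic_point t *m M)) ->
  on_twisted_cubic (cubic_infty *m M) -> maps_cubic M.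
Proof.
move=> Mpt Minf v [[t [d [d0 ->]]]|[d [d0 ->]]];
  by rewrite -scalemxAl; apply: on_twisted_cubicZ => //; apply: Mpt.
Qed.

Lemma maps_cubic_in_Gq (M N : 'M[F]_4) :
  maps_cubic M -> maps_cubic N -> M *m N = 1%:M -> in_Gq M.
Proof.
move=> MC NC MN1; split; first by case: (mulmx1_unit MN1).
move=> v _; split; first exact: MC.
by move/NC; rewrite -mulmxA MN1 mulmx1.
Qed.

Lemma in_Gq_mul (M N : 'M[F]_4) : in_Gq M -> in_Gq N -> in_Gq (M *m N).
Proof.
move=> [Mu MC] [Nu NC]; split; first by rewrite unitmx_mul Mu Nu.
move=> v v0; rewrite mulmxA; apply: iff_trans (MC v v0) (NC _ _).
by apply: contra v0 => /eqP vM0; rewrite -(mulmxK Mu v) vM0 mul0mx.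
Qed.

Lemma in_Gq_inv (M : 'M[F]_4) : in_Gq M -> in_Gq (invmx M).
Proof.
move=> [Mu MC]; split; first by rewrite unitmx_inv.
move=> v v0; have vM0 : v *m invmx M != 0.
  by apply: contra v0 => /eqP vM0; rewrite -(mulmxKV Mu v) vM0 mul0mx.
by have := MC _ vM0; rewrite mulmxKV //; apply: iff_sym.
Qed.

Lemma cubic_translation_maps_cubic c : maps_cubic (cubic_translation c).
Proof.
apply: maps_cubicP => [t|]; rewrite mul_coord4 !mxE /=.
  left; exists (t + c); apply: (same_point_coord4 (oner_neq0 F)); ring.
right; apply: (same_point_coord4 (oner_neq0 F)); ring.
Qed.

Lemma cubic_inversion_maps_cubic : maps_cubic cubic_inversion.
Proof.
apply: maps_cubicP => [t|]; rewrite mul_coord4 !mxE /=.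
  have [-> | t0] := eqVneq t 0.
    right; apply: (same_point_coord4 (oner_neq0 F)); ring.
  left; exists t^-1.
  by apply: (same_point_coord4 (expf_neq0 3 t0)); field.
left; exists 0; apply: (same_point_coord4 (oner_neq0 F)); ring.
Qed.

Lemma cubic_translation_in_Gq c : in_Gq (cubic_translation c).
Proof.
apply: (maps_cubic_in_Gq (cubic_translation_maps_cubic c)
  (cubic_translation_maps_cubic (- c))).
apply/matrixP => i j; rewrite !mxE !big_ord_recl big_ord0 !mxE.
by case: i => [[|[|[|[|i]]]] Hi] //; case: j => [[|[|[|[|j]]]] Hj] //=; ring.
Qed.

Lemma cubic_inversion_in_Gq : in_Gq cubic_inversion.
Proof.
apply: (maps_cubic_in_Gq cubic_inversion_maps_cubic
  cubic_inversion_maps_cubic).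
apply/matrixP => i j; rewrite !mxE !big_ord_recl big_ord0 !mxE.
by case: i => [[|[|[|[|i]]]] Hi] //; case: j => [[|[|[|[|j]]]] Hj] //=; ring.
Qed.

Lemma on_axisE (v : 'rV[F]_4) :
  on_axis v -> exists a b : F, ((a != 0) || (b != 0)) /\ v = coord4 0 a b 0.
Proof.
case=> v0 [vx0 vx3].
have vE : v = coord4 0 (v 0 1) (v 0 2) 0 by rewrite {1}(coord4E v) vx0 vx3.
exists (v 0 1), (v 0 2); split=> //.
apply: contraNT v0; rewrite negb_or !negbK => /andP[/eqP v1 /eqP v2].
rewrite vE v1 v2; apply/eqP/rowP => j.
by rewrite !mxE; case: j => [[|[|[|[|j]]]] Hj].
Qed.

Lemma axis_mul_inversion (a b : F) :
  coord4 0 a b 0 *m cubic_inversion = coord4 0 b a 0.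
Proof. by rewrite mul_coord4 !mxE /=; congr coord4; ring. Qed.

Section Characteristic3.
Hypothesis char3 : (3 : F) = 0.

Lemma axis_mul_translation (a b c : F) :
  coord4 0 a b 0 *m cubic_translation c = coord4 0 (a - c * b) b 0.
Proof.
have two : (2 : F) = -1 by apply: (addIr 1); rewrite addNr -char3; ring.
by rewrite mul_coord4 !mxE /=; congr coord4; rewrite ?char3 ?two; ring.
Qed.

Lemma axis_mul_translation_base (a b : F) : b != 0 ->
  same_point (coord4 0 a b 0 *m cubic_translation ((a - b) / b))
             (coord4 0 1 1 0).
Proof.
move=> b0; rewrite axis_mul_translation.
by apply: (same_point_coord4 b0); field.
Qed.

Lemma axis_orbit_base (v : 'rV[F]_4) : on_axis v ->
  exists M, in_Gq M /\ same_point (v *m M) (coord4 0 1 1 0).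
Proof.
case/on_axisE=> a [b [ab0 ->]].
have [b0|b0] := eqVneq b 0; last first.
  exists (cubic_translation ((a - b) / b)).
  by split; [exact: cubic_translation_in_Gq | exact: axis_mul_translation_base].
rewrite b0 eqxx orbF in ab0.
exists (cubic_inversion *m cubic_translation ((b - a) / a)); split.
  exact: in_Gq_mul cubic_inversion_in_Gq (cubic_translation_in_Gq _).
by rewrite mulmxA axis_mul_inversion; apply: axis_mul_translation_base.
Qed.

End Characteristic3.
End TwistedCubicGroup.

Lemma pchar_dvd_card (F : finFieldType) (p : nat) :
  prime p -> (p %| #|F|)%N -> p \in [pchar F].
Proof.
move=> p_pr; have [r r_pr rF] := finPcharP F.
rewrite -[#|F|]/#|pPrimeCharType rF| card_pprimeChar Euclid_dvdX //.
by case/andP; rewrite dvdn_prime2 // => /eqP ->.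
Qed.

Theorem proposition7p1 (q : nat) (F : finFieldType) (hF : #|F| = q)
  (hq3 : (q %% 3 = 0)%N) (hq9 : (9 <= q)%N) :
  forall u v : 'rV[F]_4, on_axis u -> on_axis v ->
    exists M : 'M[F]_4, in_Gq M /\ same_point (u *m M) v.
Proof.
have char3 : (3 : F) = 0.
  by apply: pcharf0; apply: pchar_dvd_card; rewrite // hF /dvdn hq3.
move=> u v /(axis_orbit_base char3)[M [GM uM]].
move=> /(axis_orbit_base char3)[N [GN vN]].
exists (M *m invmx N); split; first exact: in_Gq_mul GM (in_Gq_inv GN).
have Nu : N \in unitmx by case: GN.
rewrite mulmxA -[v](mulmxK Nu).
apply: same_point_trans (same_point_mulmx _ uM) _.
exact: same_point_mulmx (same_point_sym vN).
Qed.
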